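(* Let $\mathcal{U}$ be a UEC-representative. Then the partially directed graph $\mathtt{init\_CPDAG}(\mathcal{U})$ is a CPDAG, i.e. it equals the CPDAG of the Markov equivalence class of some DAG.
   Context: For a DAG $\mathcal{D}$, a trek is a path with no repeated vertices and no collider; the unconditional dependence graph $\mathcal{U}^\mathcal{D}$ has an edge between distinct $v,w$ iff there is a trek between them; a UEC-representative is an undirected graph equal to $\mathcal{U}^\mathcal{D}$ for some DAG on the same vertex set. $\mathtt{init\_CPDAG}(\mathcal{U})$ is the partially directed graph obtained from $\mathcal{U}$ as follows: for every induced path $v - v' - v''$ in $\mathcal{U}$ ($v,v''$ nonadjacent) orient its edges as $v\to v'\leftarrow v''$; thus an edge $\{a,b\}$ receives orientation $a\to b$ iff some neighbor of $b$ other than $a$ is nonadjacent to $a$. Edges receiving both orientations (bidirected) are removed; edges receiving exactly one orientation become directed accordingly; edges receiving none stay undirected. The CPDAG of a DAG $\mathcal{D}$ is the partially directed graph with the skeleton of $\mathcal{D}$ in which $i\to j$ is directed iff $i\to j$ is an edge of every DAG Markov equivalent to $\mathcal{D}$, all other edges being undirected (Markov equivalent: same skeleton and v-structures). *)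

From mathcomp Require Import all_boot.
Set Implicit Arguments. Unset Strict Implicit. Unset Printing Implicit Defensive.

(* Graphs on a finite vertex set T.  A directed graph is d : rel T
   (d x y means x -> y).  An undirected graph is u : rel T (symmetric). *)

(* A DAG: no directed cycle (this also excludes self-loops). *)
Definition is_dag (T : finType) (d : rel T) : Prop :=
  forall (x : T) (p : seq T), path d x p -> last x p = x -> p = [::].

Definition adj (T : finType) (d : rel T) (x y : T) : bool := d x y || d y x.

Definition no_collider (T : finType) (d : rel T) (x0 : T) (l : seq T) : Prop :=
  forall i, i.+2 < size l ->
    ~~ (d (nth x0 l i) (nth x0 l i.+1) && d (nth x0 l i.+2) (nth x0 l i.+1)).

Definition trek (T : finType) (d : rel T) (v w : T) : Prop :=
  exists s : seq T,
    [/\ path (adj d) v s, last v s = w, uniq (v :: s) & no_collider d v (v :: s)].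

Definition udg (T : finType) (d : rel T) (v w : T) : Prop :=
  v != w /\ trek d v w.

Definition UEC_representative (T : finType) (u : rel T) : Prop :=
  exists d : rel T, is_dag d /\ forall v w, u v w <-> udg d v w.

Record pdg (T : finType) := PDG { pdg_dir : T -> T -> Prop ; pdg_und : T -> T -> Prop }.

Definition pdg_eq (T : finType) (G H : pdg T) : Prop :=
  (forall x y, pdg_dir G x y <-> pdg_dir H x y) /\
  (forall x y, pdg_und G x y <-> pdg_und H x y).

Definition orient (T : finType) (u : rel T) (a b : T) : Prop :=
  u a b /\ exists c, [/\ c != a, u b c & ~~ u a c].

Definition init_CPDAG (T : finType) (u : rel T) : pdg T :=
  PDG (fun a b => orient u a b /\ ~ orient u b a)
      (fun a b => [/\ u a b, ~ orient u a b & ~ orient u b a]).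

Definition vstruct (T : finType) (d : rel T) (a b c : T) : bool :=
  [&& d a b, d c b, a != c & ~~ adj d a c].

Definition markov_equiv (T : finType) (d d' : rel T) : Prop :=
  (forall x y, adj d x y = adj d' x y) /\
  (forall a b c, vstruct d a b c = vstruct d' a b c).

Definition cpdag_dir (T : finType) (d : rel T) (i j : T) : Prop :=
  d i j /\ forall d' : rel T, is_dag d' -> markov_equiv d d' -> d' i j.

Definition CPDAG_of (T : finType) (d : rel T) : pdg T :=
  PDG (cpdag_dir d)
      (fun i j => [/\ adj d i j, ~ cpdag_dir d i j & ~ cpdag_dir d j i]).

From mathcomp Require Import all_boot zify.
Set Implicit Arguments. Unset Strict Implicit. Unset Printing Implicit Defensive.

(* In a DAG d, two vertices are joined by a trek iff they have a common
   source ancestor.  Writing A v for the set of source ancestors of v, the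
   UEC-representative u is therefore the "intersection graph" of the sets A v,
   and every source s has A s = {s}.  An edge a - b of u then gets the single
   orientation a -> b in init_CPDAG u exactly when A a is a proper subset of
   A b, and stays undirected when A a = A b.  Orienting u along inclusion of
   the A v (ties broken by an arbitrary ordering of the vertices) gives a DAG
   whose CPDAG is exactly that graph: ties can be broken the other way without
   changing skeleton or v-structures, while a -> b with A a proper in A b is
   the arm of the v-structure a -> b <- s for any source s in A b but not in
   A a. *)

Lemma dag_of_potential (T : finType) (d : rel T) (f : T -> nat) :
  (forall a b, d a b -> f a < f b) -> is_dag d.
Proof.
move=> f_incr x p /(sub_path f_incr).
move/(order_path_min (fun y x z => @ltn_trans (f y) (f x) (f z))).
case: p => [//|y p] /allP /(_ _ (mem_last y p)) /= lt_x_last last_x.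
by rewrite last_x ltnn in lt_x_last.
Qed.

Lemma last_rev_belast (T : Type) (x : T) p : last (last x p) (rev (belast x p)) = x.
Proof. by case: p => [|y p] //=; rewrite rev_cons last_rcons. Qed.

Section DAG.

Variables (T : finType) (d : rel T).
Hypothesis dag_d : is_dag d.

Lemma dag_edge_not_connect x y : d x y -> ~~ connect d y x.
Proof.
move=> dxy; apply/connectP => -[p dp last_p].
have := @dag_d y (rcons p y); rewrite rcons_path dp -last_p dxy last_rcons.
by move=> /(_ isT erefl); case: p {dp last_p}.
Qed.

Lemma dag_asym x y : d x y -> ~~ d y x.
Proof. by move=> /dag_edge_not_connect; apply: contra => /connect1. Qed.

Lemma dag_path_notin x p : path d x p -> x \notin p.
Proof.
apply: contraTN => /splitPr [p1 p2]; rewrite cat_path /=.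
apply/negP => /and3P [dp1 dx _].
have := @dag_d x (rcons p1 x); rewrite rcons_path dp1 dx last_rcons.
by move=> /(_ isT erefl); case: p1 {dp1 dx}.
Qed.

Lemma dag_path_uniq x p : path d x p -> uniq (x :: p).
Proof.
elim: p x => [//|y p IHp] x dp.
by rewrite cons_uniq (dag_path_notin dp) IHp //; case/andP: dp.
Qed.

Definition source (s : T) : bool := [forall z, ~~ d z s].

Lemma exists_source_ancestor v : exists2 s, source s & connect d s v.
Proof.
pose anc x := [set y | connect d y x].
case: (@arg_minnP _ v (connect d ^~ v) (fun x => #|anc x|) (connect0 d v)).
move=> s dsv s_min.
exists s => //; apply/forallP => z; apply/negP => dzs.
have anc_zs : anc z \proper anc s.
  apply/properP; split; last by exists s; rewrite !inE ?connect0 ?dag_edge_not_connect.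
  by apply/subsetP => y; rewrite !inE => /connect_trans; apply; apply: connect1.
have := s_min z (connect_trans (connect1 dzs) dsv).
by rewrite leqNgt proper_card.
Qed.

Lemma no_collider_behead x0 x l : no_collider d x0 (x :: l) -> no_collider d x0 l.
Proof. by move=> ncl i; apply: (ncl i.+1). Qed.

Lemma trek_common_ancestor v w : trek d v w -> exists2 t, connect d t v & connect d t w.
Proof.
case=> s [adj_s <- _ ncl].
(* The last component says that the walk leaves its top vertex t downwards,
   which is what excludes a collider when the walk is extended at y. *)
suff top x0 y : path (adj d) y s -> no_collider d x0 (y :: s) ->
  exists t, [/\ connect d t y, connect d t (last y s)
               & t = y \/ exists z s', s = z :: s' /\ d z y].
  by have [t [dtv dtw _]] := top v v adj_s ncl; exists t.
elim: s {adj_s ncl} y => [|z s IHs] y /=.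
  by exists y; split; rewrite ?connect0 //; left.
case/andP=> adj_yz adj_s ncl.
have [t [dtz dtl top_t]] := IHs z adj_s (no_collider_behead ncl).
case dzy: (d z y).
  exists t; split => //; first exact: connect_trans dtz (connect1 dzy).
  by right; exists z, s.
have dyz : d y z by move: adj_yz; rewrite /adj dzy orbF.
case: top_t => [tz|[z' [s' [s_eq dz'z]]]].
  rewrite tz in dtl; exists y; split; last by left.
    exact: connect0.
  exact: connect_trans (connect1 dyz) dtl.
by move: ncl; rewrite s_eq => /(_ 0 isT); rewrite /= dyz dz'z.
Qed.

Fixpoint collider_free (l : seq T) : bool :=
  if l is x :: (y :: z :: _) as l' then ~~ (d x y && d z y) && collider_free l' else true.

Lemma collider_free_cons3 x y z l :
  collider_free [:: x, y, z & l] = ~~ (d x y && d z y) && collider_free [:: y, z & l].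
Proof. by []. Qed.

Lemma collider_freeP x0 l : collider_free l -> no_collider d x0 l.
Proof.
elim: l => [|x [|y [|z l]] IHl] //; rewrite collider_free_cons3 => /andP [nc_xyz nc_l].
by case=> [|i] //= lt_i; apply: (IHl nc_l i).
Qed.

Lemma collider_free_path x p : path d x p -> collider_free (x :: p).
Proof.
elim: p x => [|y [|z p] IHp] x // /andP [dxy dp].
rewrite collider_free_cons3 IHp // andbT.
by case/andP: dp => /dag_asym /negbTE ->; rewrite andbF.
Qed.

Lemma collider_free_rev_cat x m q :
  path (fun a b => d b a) x m -> path d (last x m) q -> collider_free (x :: m ++ q).
Proof.
elim: m x => [|y m IHm] x; first by move=> _; apply: collider_free_path.
case/andP=> dyx dm dq; have := IHm y dm dq; rewrite cat_cons.
case: (m ++ q) => [_ //|z l]; rewrite collider_free_cons3 => ->; rewrite andbT.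
by rewrite (negbTE (dag_asym dyx)).
Qed.

Lemma common_ancestor_trek t p q :
  path d t p -> path d t q -> trek d (last t p) (last t q).
Proof.
have [n] := ubnP (size p + size q); elim: n => // n IHn in t p q *.
(* Paths that meet restart from the meeting point; disjoint ones glue into the trek
   last t p <- ... <- t -> ... -> last t q. *)
move=> lt_pq dp dq; case common: (has (mem q) p).
  case/hasP: common => z /splitPr [p1 p2] /splitPr [q1 q2] in lt_pq dp dq *.
  move: lt_pq dp dq; rewrite !size_cat !cat_path !last_cat /=.
  move=> lt_pq /and3P [_ _ dp2] /and3P [_ _ dq2].
  by apply: IHn dp2 dq2; lia.
have last_r : last (last t p) (rev (belast t p)) = t by exact: last_rev_belast.
exists (rev (belast t p) ++ q); split.
- rewrite cat_path rev_path last_r; apply/andP; split.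
    by apply: sub_path dp => a b dba; rewrite /adj dba orbT.
  by apply: sub_path dq => a b dab; rewrite /adj dab.
- by rewrite last_cat last_r.
- rewrite -cat_cons -rev_rcons -lastI cat_uniq rev_uniq dag_path_uniq //=.
  have := dag_path_uniq dq; rewrite cons_uniq => /andP [tq ->]; rewrite andbT.
  apply/hasPn => x xq; rewrite mem_rev inE negb_or; apply/andP; split.
    by apply: contraNneq tq => <-.
  by apply: contraFN common => xp; apply/hasP; exists x.
- apply: collider_freeP; apply: collider_free_rev_cat; first by rewrite rev_path.
  by rewrite last_r.
Qed.

Lemma trek_common_source v w :
  trek d v w <-> exists s, [/\ source s, connect d s v & connect d s w].
Proof.
split.
  case/trek_common_ancestor => t dtv dtw.
  have [s src_s dst] := exists_source_ancestor t.
  by exists s; split=> //; apply: connect_trans dst _.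
case=> s [_ /connectP [p dp ->] /connectP [q dq ->]].
exact: common_ancestor_trek.
Qed.

Lemma connect_source x s : source s -> connect d x s -> x = s.
Proof.
move=> /forallP src_s /connectP [[//|y p] dp /= s_last].
move: dp; rewrite lastI rcons_path -s_last => /andP [_ dlast].
by have := src_s (last x (belast y p)); rewrite dlast.
Qed.

Definition source_ancestors v : {set T} := [set s | source s & connect d s v].

Lemma udg_source_ancestors v w :
  udg d v w <-> v != w /\ exists s, s \in source_ancestors v /\ s \in source_ancestors w.
Proof.
split=> -[vw common]; split=> //.
  case/trek_common_source: common => s [src_s dsv dsw].
  by exists s; rewrite !inE src_s dsv dsw.
case: common => s []; rewrite !inE => /andP [src_s dsv] /andP [_ dsw].
by apply/trek_common_source; exists s.
Qed.

Lemma source_ancestors_source v s :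
  s \in source_ancestors v -> source_ancestors s = [set s].
Proof.
rewrite inE => /andP [src_s _]; apply/setP => x; rewrite !inE.
apply/andP/eqP => [[_ /(connect_source src_s)] //|->].
by rewrite src_s connect0.
Qed.

Lemma source_ancestors_nonempty v : exists s, s \in source_ancestors v.
Proof.
by have [s src_s dsv] := exists_source_ancestor v; exists s; rewrite inE src_s.
Qed.

End DAG.

Section ProperLex.

Variables (T : finType) (A : T -> {set T}) (n : nat).

Definition proper_lex (k : T -> 'I_n) : rel T :=
  fun a b => (A a \proper A b) || (A a == A b) && (k a < k b).

Lemma proper_lex_subset k a b : proper_lex k a b -> A a \subset A b.
Proof. by case/orP => [/properP [] | /andP [/eqP -> _]]. Qed.

Lemma proper_lex_dag k : is_dag (proper_lex k).
Proof.
apply: (@dag_of_potential _ _ (fun v => #|A v| * n + k v)).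
move=> a b /orP [/proper_card lt_ab | /andP [/eqP -> lt_k]]; last by rewrite ltn_add2l.
have := leq_mul lt_ab (leqnn n); have := ltn_ord (k a); lia.
Qed.

Lemma proper_lex_rev k a b :
  proper_lex k a b -> proper_lex (fun v => rev_ord (k v)) a b -> A a \proper A b.
Proof.
case/orP => // /andP [_ lt_k] /orP [//|/andP [_]] /=.
by have := ltn_ord (k b); lia.
Qed.

Lemma adj_proper_lex k x y : injective k ->
  adj (proper_lex k) x y = (x != y) && ((A x \subset A y) || (A y \subset A x)).
Proof.
move=> k_inj; rewrite /adj /proper_lex !properE eqEsubset [A y == A x]eqEsubset.
case: (boolP (A x \subset A y)) => Sxy; case: (boolP (A y \subset A x)) => Syx /=;
  rewrite ?andbF ?orbF ?andbT //=.
- have -> : (x != y) = (k x != k y) by rewrite (inj_eq k_inj).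
  by rewrite neq_ltn.
- by case: eqP Syx => // ->; rewrite subxx.
- by case: eqP Sxy => // ->; rewrite subxx.
Qed.

Lemma vstruct_proper_lex k a b c : injective k ->
  vstruct (proper_lex k) a b c =
  [&& A a \proper A b, A c \proper A b, a != c &
      ~~ ((A a \subset A c) || (A c \subset A a))].
Proof.
move=> k_inj; rewrite /vstruct adj_proper_lex //.
apply/and4P/and4P => -[dab dcb ac]; rewrite ac /= => nAac; split => //.
- case/orP: dab => // /andP [/eqP Aab _].
  by move: nAac; rewrite Aab (proper_lex_subset dcb) orbT.
- case/orP: dcb => // /andP [/eqP Acb _].
  by move: nAac; rewrite Acb (proper_lex_subset dab).
- by rewrite /proper_lex dab.
- by rewrite /proper_lex dcb.
Qed.

Lemma proper_lex_markov_equiv k k' : injective k -> injective k' ->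
  markov_equiv (proper_lex k) (proper_lex k').
Proof.
by move=> k_inj k'_inj; split=> *; rewrite ?adj_proper_lex ?vstruct_proper_lex.
Qed.

End ProperLex.

Section SourceSets.

Variables (T : finType) (u : rel T) (A : T -> {set T}).
Hypothesis u_meet : forall v w, u v w <-> v != w /\ exists s, s \in A v /\ s \in A w.
Hypothesis A_source : forall v s, s \in A v -> A s = [set s].
Hypothesis A_nonempty : forall v, exists s, s \in A v.

Lemma mem_A_source v s x : s \in A v -> x \in A s -> x = s.
Proof. by move=> /A_source ->; rewrite inE => /eqP. Qed.

Lemma u_sym a b : u a b -> u b a.
Proof.
case/u_meet => ab [s [sa sb]].
by apply/u_meet; split; [rewrite eq_sym | exists s].
Qed.

Lemma u_subset a b : a != b -> A a \subset A b -> u a b.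
Proof.
move=> ab /subsetP Aab; have [s sa] := A_nonempty a.
by apply/u_meet; split=> //; exists s; split=> //; apply: Aab.
Qed.

Lemma orient_iff a b : orient u a b <-> u a b /\ ~~ (A b \subset A a).
Proof.
split.
  case=> uab [c [ca ubc nuac]]; split=> //.
  case/u_meet: ubc => _ [s [sb sc]].
  apply/negP => /subsetP /(_ s sb) sa; move/negP: nuac; apply.
  by apply/u_meet; split; [rewrite eq_sym | exists s].
case=> uab /subsetPn [s sb sa]; split=> //.
have ss : s \in A s by rewrite (A_source sb) set11.
exists s; split.
- by apply: contraNneq sa => <-.
- apply/u_meet; split; last by exists s.
  apply/eqP => bs; case/u_meet: uab => _ [x [xa xb]].
  rewrite bs in xb; have xs := mem_A_source sb xb.
  by move: sa; rewrite -xs xa.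
- apply/negP => /u_meet [_ [x [xa /(mem_A_source sb) xs]]].
  by move: sa; rewrite -xs xa.
Qed.

Lemma init_CPDAG_dir a b : pdg_dir (init_CPDAG u) a b <-> A a \proper A b.
Proof.
rewrite properE; split=> /=.
  case=> /orient_iff [uab nSba] nab; rewrite nSba andbT.
  by apply/negPn/negP => nSab; apply: nab; apply/orient_iff; split=> //; apply: u_sym.
case/andP => Sab nSba; have uab : u a b.
  by apply: u_subset Sab; apply: contraNneq nSba => ->.
by split; [apply/orient_iff | case/orient_iff => _; rewrite Sab].
Qed.

Lemma init_CPDAG_und a b : pdg_und (init_CPDAG u) a b <-> a != b /\ A a = A b.
Proof.
split=> /=.
  case=> uab nab nba; split; first by case/u_meet: uab.
  apply/eqP; rewrite eqEsubset; apply/andP; split; apply/negPn/negP => nS.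
  - by apply: nba; apply/orient_iff; split=> //; apply: u_sym.
  - by apply: nab; apply/orient_iff.
case=> ab Aab; split; first by apply: u_subset; rewrite ?Aab.
- by case/orient_iff; rewrite Aab subxx.
- by case/orient_iff; rewrite Aab subxx.
Qed.

Variables (n : nat) (k : T -> 'I_n).
Hypothesis k_inj : injective k.

Lemma cpdag_dir_proper_lex a b : cpdag_dir (proper_lex A k) a b <-> A a \proper A b.
Proof.
have rk_inj : injective (fun v => rev_ord (k v)) by move=> x y /rev_ord_inj /k_inj.
split.
  case=> dab /(_ _ (@proper_lex_dag T A n _) (proper_lex_markov_equiv A k_inj rk_inj)).
  exact: proper_lex_rev.
move=> Aab; split; first by rewrite /proper_lex Aab.
move=> d' _ [_ vstruct_eq].
have /properP [Sab [s sb sa]] := Aab.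
have As := A_source sb; have [x xa] := A_nonempty a.
have nSa : ~~ (A a \subset [set s]).
  by apply/subsetPn; exists x => //; rewrite inE; apply: contraNneq sa => <-.
have : vstruct (proper_lex A k) a b s.
  rewrite vstruct_proper_lex // Aab As sub1set (negbTE sa) orbF nSa properE sub1set sb.
  rewrite andbT /=; apply/andP; split; first by apply: contra nSa; apply: subset_trans.
  by apply: contraNneq sa => ->; rewrite As set11.
by rewrite vstruct_eq => /and4P [].
Qed.

Lemma cpdag_und_proper_lex a b :
  pdg_und (CPDAG_of (proper_lex A k)) a b <-> a != b /\ A a = A b.
Proof.
split=> /=.
  case; rewrite adj_proper_lex // => /andP [ab S] ndab ndba; split=> //.
  apply/eqP; rewrite eqEsubset; case/orP: S => S; rewrite S ?andbT /=.
  - apply/negPn/negP => nS; apply: ndab; apply/cpdag_dir_proper_lex.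
    by rewrite properE S nS.
  - apply/negPn/negP => nS; apply: ndba; apply/cpdag_dir_proper_lex.
    by rewrite properE S nS.
case=> ab Aab; split.
- by rewrite adj_proper_lex // ab Aab subxx.
- by move/cpdag_dir_proper_lex; rewrite Aab properxx.
- by move/cpdag_dir_proper_lex; rewrite Aab properxx.
Qed.

Theorem init_CPDAG_eq_CPDAG_of_proper_lex :
  pdg_eq (init_CPDAG u) (CPDAG_of (proper_lex A k)).
Proof.
split=> a b.
  exact: iff_trans (init_CPDAG_dir a b) (iff_sym (cpdag_dir_proper_lex a b)).
exact: iff_trans (init_CPDAG_und a b) (iff_sym (cpdag_und_proper_lex a b)).
Qed.

End SourceSets.

Theorem lemma5p3 (T : finType) (u : rel T) :
  UEC_representative u ->
  exists d : rel T, is_dag d /\ pdg_eq (init_CPDAG u) (CPDAG_of d).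
Proof.
case=> d [dag_d u_udg].
have u_meet v w : u v w <->
    v != w /\ exists s, s \in source_ancestors d v /\ s \in source_ancestors d w.
  exact: iff_trans (u_udg v w) (udg_source_ancestors dag_d v w).
exists (proper_lex (source_ancestors d) (@enum_rank T)).
split; first exact: proper_lex_dag.
apply: (init_CPDAG_eq_CPDAG_of_proper_lex u_meet _ _ (@enum_rank_inj T)).
- exact: source_ancestors_source.
- exact: source_ancestors_nonempty.
Qed.
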